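(* For every $\mathbf v\in\mathbf V_h$ (identified with its coefficient vector), $$\|B_{\mathbf u}\mathbf v\|_{M_p^{-1}}\le\frac1\zeta\|\mathbf v\|_{A_{\mathbf u}}.$$
   Context: $\Omega\subset\mathbb{R}^d$, $d\in\{2,3\}$, bounded, with a simplicial mesh; $\mu>0,\lambda\ge0$ Lamé coefficients, $\zeta=\sqrt{\lambda+2\mu/d}$. $\mathbf V_h$: continuous piecewise linear vector fields (vanishing on a Dirichlet part of the boundary) enriched with edge/face bubble functions; $Q_h$ piecewise constants. $A_{\mathbf u}$ is the matrix of $a(\mathbf u,\mathbf v)=2\mu\int_\Omega\varepsilon(\mathbf u):\varepsilon(\mathbf v)+\lambda\int_\Omega\operatorname{div}\mathbf u\operatorname{div}\mathbf v$ on $\mathbf V_h$, $\varepsilon(\mathbf u)=\tfrac12(\nabla\mathbf u+\nabla\mathbf u^T)$; $B_{\mathbf u}$ is the matrix of $-(\operatorname{div}\mathbf v,q)$, $\mathbf v\in\mathbf V_h,q\in Q_h$; $M_p$ the mass matrix of $Q_h$. For SPD $H$, $\|\mathbf x\|_H^2=(H\mathbf x,\mathbf x)$. *)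

From HB Require Import structures.
From mathcomp Require Import all_boot all_order all_algebra.
From mathcomp Require Import all_classical all_reals all_analysis.
Set Implicit Arguments. Unset Strict Implicit. Unset Printing Implicit Defensive.
Import Order.TTheory GRing.Theory Num.Theory.
Local Open Scope ring_scope.

Definition symgrad (R : realType) (d : nat) (G : 'M[R]_d) : 'M[R]_d :=
  2^-1 *: (G + G^T).

Definition frob (R : realType) (d : nat) (A B : 'M[R]_d) : R :=
  \sum_(p < d) \sum_(q < d) A p q * B p q.

Definition divg (R : realType) (d : nat) (G : 'M[R]_d) : R := \tr G.

Definition zeta (R : realType) (d : nat) (mu lam : R) : R :=
  Num.sqrt (lam + 2 * mu / d%:R).

(* Gradient (Jacobian) field of the discrete field with coefficient vector v
   in the basis whose Jacobian fields are G_i. *)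
Definition gradv (R : realType) (d nu : nat) (T : Type)
  (G : 'I_nu -> T -> 'M[R]_d) (v : 'cV[R]_nu) (x : T) : 'M[R]_d :=
  \sum_(i < nu) v i 0 *: G i x.

(* Elasticity bilinear form
   a(u,v) = 2 mu \int eps(u):eps(v) + lam \int div u div v  on Omega (= setT). *)
Definition aform (R : realType) (d : nat) (dT : measure_display)
  (T : measurableType dT) (m : {measure set T -> \bar R}) (mu lam : R)
  (Gu Gv : T -> 'M[R]_d) : R :=
  2 * mu * Rintegral m setT (fun x => frob (symgrad (Gu x)) (symgrad (Gv x)))
  + lam * Rintegral m setT (fun x => divg (Gu x) * divg (Gv x)).

Definition Amat (R : realType) (d nu : nat) (dT : measure_display)
  (T : measurableType dT) (m : {measure set T -> \bar R}) (mu lam : R)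
  (G : 'I_nu -> T -> 'M[R]_d) : 'M[R]_nu :=
  \matrix_(i, j) aform m mu lam (G j) (G i).

Definition Bmat (R : realType) (d nu nK : nat) (dT : measure_display)
  (T : measurableType dT) (m : {measure set T -> \bar R})
  (K : 'I_nK -> set T) (G : 'I_nu -> T -> 'M[R]_d) : 'M[R]_(nK, nu) :=
  \matrix_(k, j) - Rintegral m (K k) (fun x => divg (G j x)).

(* pressure mass matrix M_p for piecewise constants: diag(|K_k|) *)
Definition Mpmat (R : realType) (nK : nat) (dT : measure_display)
  (T : measurableType dT) (m : {measure set T -> \bar R})
  (K : 'I_nK -> set T) : 'M[R]_nK :=
  \matrix_(k, l) (if k == l then fine (m (K k)) else 0).

Definition normH (R : realType) (n : nat) (H : 'M[R]_n) (x : 'cV[R]_n) : R :=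
  Num.sqrt ((x^T *m H *m x) 0 0).

(* With w = sum_i v_i phi_i one has |v|_A^2 = a(w, w) and, M_p being
   diagonal with entries |K|, |B v|_(M_p^-1)^2 = sum_K (int_K div w)^2 / |K|.
   By Cauchy-Schwarz on each cell this is at most int_Omega (div w)^2.
   Pointwise, div w is the trace of eps(w), so (div w)^2 <= d |eps(w)|^2,
   whence zeta^2 int (div w)^2 = lam int (div w)^2 + (2 mu / d) int (div w)^2
   <= a(w, w). *)

From HB Require Import structures.
From mathcomp Require Import all_boot all_order all_algebra.
From mathcomp Require Import all_classical all_reals all_analysis.
From mathcomp Require Import measurable_realfun ring lra.
Import Order.TTheory GRing.Theory Num.Theory.
Local Open Scope ring_scope.
Local Open Scope classical_set_scope.
Set Implicit Arguments.
Unset Strict Implicit.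

Lemma sqr_sum_le (R : realFieldType) n (a : 'I_n -> R) :
  (\sum_i a i) ^+ 2 <= n%:R * \sum_i a i ^+ 2.
Proof.
set S := \sum_i a i; set Q := \sum_i a i ^+ 2.
have : 0 <= \sum_i \sum_j (a i - a j) ^+ 2.
  by apply: sumr_ge0 => i _; apply: sumr_ge0 => j _; exact: sqr_ge0.
have expand i j : (a i - a j) ^+ 2 = a i ^+ 2 + a j ^+ 2 - 2 * a i * a j by ring.
under eq_bigr => i _ do under eq_bigr => j _ do rewrite expand.
under eq_bigr => i _ do
  rewrite sumrB big_split /= sumr_const card_ord -mulr_sumr -/S -/Q.
rewrite sumrB big_split /= sumr_const card_ord sumrMnl -mulr_suml -mulr_sumr.
rewrite -/S -/Q -mulr_natl.
nra.
Qed.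

Lemma sqrt_le_sqrtV_mul (R : rcfType) (z a b : R) :
  0 < z -> z * a <= b -> Num.sqrt a <= (Num.sqrt z)^-1 * Num.sqrt b.
Proof.
move=> z_gt0 zab; have [a_lt0|a_ge0] := ltP a 0.
  by rewrite ltr0_sqrtr // mulr_ge0 ?invr_ge0 ?sqrtr_ge0.
have z_ge0 := ltW z_gt0.
have b_ge0 : 0 <= b by apply: le_trans zab; rewrite mulr_ge0.
rewrite -(sqrtrV z_ge0) -sqrtrM ?invr_ge0 // ler_sqrt ?mulr_ge0 ?invr_ge0 //.
by rewrite mulrC ler_pdivlMr // mulrC.
Qed.

Lemma mx_form (R : comPzRingType) n (H : 'M[R]_n) (y : 'cV[R]_n) :
  (y^T *m H *m y) 0 0 = \sum_i \sum_j y i 0 * H i j * y j 0.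
Proof.
rewrite mxE; under eq_bigr => j _ do rewrite mxE mulr_suml.
rewrite exchange_big; apply: eq_bigr => i _; apply: eq_bigr => j _.
by rewrite mxE.
Qed.

Lemma diag_mx_form (R : comPzRingType) n (r : 'rV[R]_n) (y : 'cV[R]_n) :
  (y^T *m diag_mx r *m y) 0 0 = \sum_i r 0 i * y i 0 ^+ 2.
Proof.
rewrite mul_mx_diag mxE; apply: eq_bigr => i _.
by rewrite !mxE; ring.
Qed.

Lemma invmx_diag_mx (F : fieldType) n (r : 'rV[F]_n) :
  (forall i, r 0 i != 0) -> invmx (diag_mx r) = diag_mx (map_mx GRing.inv r).
Proof.
move=> r_neq0.
have rV : diag_mx r *m diag_mx (map_mx GRing.inv r) = 1%:M.
  apply/matrixP => i j; rewrite mul_diag_mx !mxE.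
  by case: (i == j); rewrite ?mulr0 // mulfV.
have [r_unit _] := mulmx1_unit rV.
by rewrite -[RHS]mul1mx -(mulVmx r_unit) -mulmxA rV mulmx1.
Qed.

Section matrix_identities.
Context (R : realType) (d : nat).
Implicit Types A B : 'M[R]_d.

Lemma frobC A B : frob A B = frob B A.
Proof. by apply: eq_bigr => p _; apply: eq_bigr => q _; rewrite mulrC. Qed.

Lemma frob_suml n (c : 'I_n -> R) (A : 'I_n -> 'M[R]_d) B :
  frob (\sum_i c i *: A i) B = \sum_i c i * frob (A i) B.
Proof.
rewrite /frob; under eq_bigr => p _ do under eq_bigr => q _ do
  rewrite summxE big_distrl.
under eq_bigr => p _ do rewrite exchange_big.
rewrite exchange_big; apply: eq_bigr => i _; rewrite mulr_sumr.
apply: eq_bigr => p _; rewrite mulr_sumr; apply: eq_bigr => q _.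
by rewrite !mxE mulrA.
Qed.

Lemma symgrad_sum n (c : 'I_n -> R) (A : 'I_n -> 'M[R]_d) :
  symgrad (\sum_i c i *: A i) = \sum_i c i *: symgrad (A i).
Proof.
rewrite /symgrad raddf_sum -big_split scaler_sumr; apply: eq_bigr => i _ /=.
by rewrite linearZ /= -scalerDr !scalerA mulrC.
Qed.

Lemma divg_sum n (c : 'I_n -> R) (A : 'I_n -> 'M[R]_d) :
  divg (\sum_i c i *: A i) = \sum_i c i * divg (A i).
Proof. by rewrite /divg raddf_sum; apply: eq_bigr => i _; exact: mxtraceZ. Qed.

Lemma divg_symgrad A : divg (symgrad A) = divg A.
Proof.
by rewrite /divg /symgrad mxtraceZ mxtraceD mxtrace_tr; field.
Qed.

Lemma sqr_divg_le A : divg A ^+ 2 <= d%:R * frob (symgrad A) (symgrad A).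
Proof.
rewrite -divg_symgrad; set S := symgrad A.
apply: (le_trans (sqr_sum_le (fun p => S p p))).
rewrite ler_wpM2l // /frob; apply: ler_sum => p _.
rewrite (bigD1 p) //= -expr2 lerDl.
by apply: sumr_ge0 => q _; rewrite -expr2 sqr_ge0.
Qed.

End matrix_identities.

Section sqr_integrable.
Context (R : realType) (dT : measure_display) (T : measurableType dT)
  (m : {measure set T -> \bar R}).

Definition sqr_integrable (D : set T) (f : T -> R) :=
  measurable_fun D f /\ m.-integrable D (fun x => (f x ^+ 2)%:E).

Lemma integrable_sum_EFin D (I : Type) (s : seq I) (F : I -> T -> R) :
  measurable D -> (forall i, m.-integrable D (EFin \o F i)) ->
  m.-integrable D (fun x => (\sum_(i <- s) F i x)%:E).
Proof.
move=> mD hF; apply: eq_integrable (integrable_sum mD s (fun i _ => hF i)) => //.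
by move=> x _; rewrite sumEFin.
Qed.

Lemma Rintegral_sum D (I : Type) (s : seq I) (F : I -> T -> R) :
  measurable D -> (forall i, m.-integrable D (EFin \o F i)) ->
  \int[m]_(x in D) (\sum_(i <- s) F i x) = \sum_(i <- s) \int[m]_(x in D) F i x.
Proof.
move=> mD hF; rewrite /Rintegral sum_fine; last first.
  by move=> i _; exact: (integrable_fin_num mD (hF i)).
congr fine; rewrite -integral_sum //.
by apply: eq_integral => x _; rewrite sumEFin.
Qed.

Variable (D : set T).
Hypothesis mD : measurable D.

Lemma sqr_integrable_mul f g : sqr_integrable D f -> sqr_integrable D g ->
  m.-integrable D (fun x => (f x * g x)%:E).
Proof.
move=> [mf If] [mg Ig].
apply: (le_integrable mD _ _ (integrableD mD If Ig)).
  by apply/measurable_EFinP; apply: measurable_funM.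
move=> x _; rewrite !abse_EFin lee_fin normrM.
rewrite (ger0_norm (addr_ge0 (sqr_ge0 _) (sqr_ge0 _))).
rewrite -(real_normK (num_real (f x))) -(real_normK (num_real (g x))).
have := sqr_ge0 (`|f x| - `|g x|).
have := mulr_ge0 (normr_ge0 (f x)) (normr_ge0 (g x)).
nra.
Qed.

Lemma sqr_integrableD f g : sqr_integrable D f -> sqr_integrable D g ->
  sqr_integrable D (fun x => f x + g x).
Proof.
move=> hf hg; have Ifg := sqr_integrable_mul hf hg.
case: hf hg => mf If [mg Ig]; split; first exact: measurable_funD.
have := integrableD mD (integrableD mD If Ig) (integrableZl mD 2 Ifg).
apply: eq_integrable => // x _ /=; rewrite -EFinM -!EFinD; congr EFin; ring.
Qed.

Lemma sqr_integrableZ c f :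
  sqr_integrable D f -> sqr_integrable D (fun x => c * f x).
Proof.
move=> [mf If]; split; first exact: measurable_funM.
apply: eq_integrable (integrableZl mD (c ^+ 2) If) => // x _ /=.
by rewrite -EFinM exprMn.
Qed.

Lemma sqr_integrable_cst c : (m D < +oo)%E -> sqr_integrable D (fun => c).
Proof.
move=> mD_fin; split; first exact: measurable_cst.
apply/integrableP; split; first exact/measurable_EFinP/measurable_cst.
by rewrite integral_cst // lte_mul_pinfty // lee_fin.
Qed.

Lemma sqr_integrable_sum (I : Type) (s : seq I) (F : I -> T -> R) :
  (forall i, sqr_integrable D (F i)) ->
  sqr_integrable D (fun x => \sum_(i <- s) F i x).
Proof.
move=> hF; elim: s => [|i s IH].
  under [fun x => _]funext => x do rewrite big_nil.
  split; first exact: measurable_cst.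
  by under eq_fun do rewrite expr0n; exact: integrable0.
under [fun x => _]funext => x do rewrite big_cons.
exact: sqr_integrableD.
Qed.

Lemma sqr_integrableS E f : measurable E -> E `<=` D ->
  sqr_integrable D f -> sqr_integrable E f.
Proof.
move=> mE ED [mf If]; split; [exact: measurable_funS mf | exact: integrableS If].
Qed.

Lemma sqr_integrable_integrable f : (m D < +oo)%E -> sqr_integrable D f ->
  m.-integrable D (EFin \o f).
Proof.
move=> mD_fin hf; have := sqr_integrable_mul hf (sqr_integrable_cst 1 mD_fin).
by under eq_fun do rewrite mulr1.
Qed.

Lemma Rintegral_sqr_le f :
  (0 < m D)%E -> (m D < +oo)%E -> sqr_integrable D f ->
  (\int[m]_(x in D) f x) ^+ 2 / fine (m D) <= \int[m]_(x in D) f x ^+ 2.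
Proof.
move=> mD_gt0 mD_fin hf; have [_ Jf] := hf.
have If := sqr_integrable_integrable mD_fin hf.
have a0 : 0 < fine (m D) by apply: fine_gt0; rewrite mD_gt0 mD_fin.
set a := fine (m D) in a0 *; set I := \int[m]_(x in D) f x.
set J := \int[m]_(x in D) f x ^+ 2.
have Ic := sqr_integrable_integrable mD_fin (sqr_integrable_cst (I ^+ 2) mD_fin).
have Jfa := integrableZl mD (a ^+ 2) Jf.
have Ifa := integrableZl mD (2 * a * I) If.
have Iq := integrableB mD Jfa Ifa.
have : 0 <= \int[m]_(x in D) (a ^+ 2 * f x ^+ 2 - 2 * a * I * f x + I ^+ 2).
  apply: Rintegral_ge0 => x _.
  by rewrite (_ : _ + _ = (a * f x - I) ^+ 2) ?sqr_ge0 //; ring.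
rewrite RintegralD // RintegralB // Rintegral_cst // !RintegralZl // -/I -/J -/a.
rewrite (_ : _ + _ = a * (J * a - I ^+ 2)); last by ring.
by rewrite pmulr_rge0 // subr_ge0 ler_pdivrMr.
Qed.

End sqr_integrable.

Section elasticity_forms.
Context (R : realType) (dT : measure_display) (T : measurableType dT)
  (m : {measure set T -> \bar R}) (d : nat).

Definition sqr_integrable_mx (F : T -> 'M[R]_d) :=
  forall p q, sqr_integrable m setT (fun x => F x p q).

Lemma sqr_integrable_mx_gradv nu (G : 'I_nu -> T -> 'M[R]_d) v :
  (forall i, sqr_integrable_mx (G i)) -> sqr_integrable_mx (gradv G v).
Proof.
move=> hG p q; rewrite /gradv.
under [fun x => _]funext => x do rewrite summxE.
under [fun x => _]funext => x do under eq_bigr => i _ do rewrite mxE.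
by apply: sqr_integrable_sum => // i; apply: sqr_integrableZ => //; exact: hG.
Qed.

Lemma sqr_integrable_mx_symgrad F :
  sqr_integrable_mx F -> sqr_integrable_mx (fun x => symgrad (F x)).
Proof.
move=> hF p q; under [fun x => _]funext => x do rewrite !mxE.
by apply: sqr_integrableZ => //; apply: sqr_integrableD => //; exact: hF.
Qed.

Lemma sqr_integrable_divg F :
  sqr_integrable_mx F -> sqr_integrable m setT (fun x => divg (F x)).
Proof. by move=> hF; apply: sqr_integrable_sum => // p; exact: hF. Qed.

Lemma integrable_frob F H : sqr_integrable_mx F -> sqr_integrable_mx H ->
  m.-integrable setT (fun x => (frob (F x) (H x))%:E).
Proof.
move=> hF hH; apply: integrable_sum_EFin => // p.
by apply: integrable_sum_EFin => // q; exact: sqr_integrable_mul.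
Qed.

Lemma aformC mu lam (F H : T -> 'M[R]_d) :
  aform m mu lam F H = aform m mu lam H F.
Proof.
rewrite /aform; congr (_ * _ + _ * _); apply: eq_Rintegral => x _.
  exact: frobC.
exact: mulrC.
Qed.

Lemma aform_gradvl mu lam nu (G : 'I_nu -> T -> 'M[R]_d) v H :
  (forall i, sqr_integrable_mx (G i)) -> sqr_integrable_mx H ->
  aform m mu lam (gradv G v) H = \sum_i v i 0 * aform m mu lam (G i) H.
Proof.
move=> hG hH; have hSH := sqr_integrable_mx_symgrad hH.
have If i := integrable_frob (sqr_integrable_mx_symgrad (hG i)) hSH.
have Id i := sqr_integrable_mul measurableT (sqr_integrable_divg (hG i))
  (sqr_integrable_divg hH).
rewrite /aform /gradv.
under eq_Rintegral do rewrite symgrad_sum frob_suml.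
under [X in _ + lam * X]eq_Rintegral do rewrite divg_sum mulr_suml.
under [X in _ + lam * X]eq_Rintegral do under eq_bigr do rewrite -mulrA.
rewrite !Rintegral_sum // => [|i|i]; last 2 first.
- exact: integrableZl (Id i).
- exact: integrableZl (If i).
rewrite !mulr_sumr -big_split /=; apply: eq_bigr => i _.
by rewrite !RintegralZl //; [ring | exact: Id | exact: If].
Qed.

Lemma Amat_form mu lam nu (G : 'I_nu -> T -> 'M[R]_d) v :
  (forall i, sqr_integrable_mx (G i)) ->
  (v^T *m Amat m mu lam G *m v) 0 0 = aform m mu lam (gradv G v) (gradv G v).
Proof.
move=> hG; have hw := sqr_integrable_mx_gradv v hG.
rewrite mx_form aform_gradvl //; apply: eq_bigr => i _.
rewrite aformC aform_gradvl // mulr_sumr; apply: eq_bigr => j _.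
by rewrite mxE; ring.
Qed.

Lemma Rintegral_sqr_divg_le_aform mu lam F :
  (0 < d)%N -> 0 <= mu -> sqr_integrable_mx F ->
  (lam + 2 * mu / d%:R) * \int[m]_x divg (F x) ^+ 2 <= aform m mu lam F F.
Proof.
move=> d_gt0 mu_ge0 hF; have hS := sqr_integrable_mx_symgrad hF.
have [_ Idiv] := sqr_integrable_divg hF.
rewrite /aform mulrDl [X in _ <= X]addrC.
under [X in _ <= lam * X + _]eq_Rintegral do rewrite -expr2.
rewrite lerD2l -mulrA ler_wpM2l ?mulr_ge0 //.
rewrite mulrC ler_pdivrMr ?ltr0n // mulrC.
rewrite -RintegralZl //; last exact: integrable_frob.
apply: le_Rintegral => //; first exact: integrableZl (integrable_frob hS hS).
by move=> x _; exact: sqr_divg_le.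
Qed.

End elasticity_forms.

Section finite_partition.
Context (R : realType) (dT : measure_display) (T : measurableType dT)
  (m : {measure set T -> \bar R}) (I : finType) (K : I -> set T).
Hypotheses (mK : forall k, measurable (K k))
  (K_disj : forall k l, k != l -> K k `&` K l = set0)
  (K_cover : \bigcup_(k in [set: I]) K k = [set: T]).

Lemma Rintegral_partition g : m.-integrable setT (EFin \o g) ->
  \int[m]_x g x = \sum_k \int[m]_(x in K k) g x.
Proof.
move=> Ig.
have cover : \big[setU/set0]_(k <- index_enum I) K k = setT.
  rewrite -bigcup_seq -K_cover; congr bigcup.
  by apply/seteqP; split => k //= _; rewrite mem_index_enum.
have triv : trivIset [set` index_enum I] K.
  move=> k l _ _ [x [xk xl]]; apply/eqP; apply: contraT => /K_disj kl.
  by have : (K k `&` K l) x by []; rewrite kl.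
have := integral_bigsetU_EFin m (f := g) mK (index_enum_uniq I) triv.
rewrite /= cover => /(_ (measurable_int m Ig)) intU.
rewrite /Rintegral intU -sum_fine // => k _.
by apply: integrable_fin_num => //; exact: integrableS Ig.
Qed.

Hypotheses (K_pos : forall k, (0 < m (K k))%E)
  (K_fin : forall k, (m (K k) < +oo)%E).

Lemma sum_sqr_Rintegral_le f : sqr_integrable m setT f ->
  \sum_k (\int[m]_(x in K k) f x) ^+ 2 / fine (m (K k)) <= \int[m]_x f x ^+ 2.
Proof.
move=> hf; rewrite (@Rintegral_partition (fun x => f x ^+ 2)); last by case: hf.
apply: ler_sum => k _; apply: Rintegral_sqr_le => //.
exact: sqr_integrableS hf.
Qed.

End finite_partition.

Section pressure_matrices.
Context (R : realType) (dT : measure_display) (T : measurableType dT)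
  (m : {measure set T -> \bar R}) (n : nat) (K : 'I_n -> set T).

Lemma Mpmat_diag : Mpmat m K = diag_mx (\row_k fine (m (K k))).
Proof. by apply/matrixP => k l; rewrite !mxE; case: eqP. Qed.

Lemma Mpmat_inv_form (y : 'cV[R]_n) :
  (forall k, (0 < m (K k))%E) -> (forall k, (m (K k) < +oo)%E) ->
  (y^T *m invmx (Mpmat m K) *m y) 0 0 = \sum_k y k 0 ^+ 2 / fine (m (K k)).
Proof.
move=> K_pos K_fin; rewrite Mpmat_diag invmx_diag_mx => [|k].
  by rewrite diag_mx_form; apply: eq_bigr => k _; rewrite !mxE mulrC.
by rewrite mxE gt_eqF // fine_gt0 // K_pos K_fin.
Qed.

Lemma Bmat_mul_gradv d nu (G : 'I_nu -> T -> 'M[R]_d) v k :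
  measurable (K k) -> (m (K k) < +oo)%E ->
  (forall i, sqr_integrable_mx m (G i)) ->
  (Bmat m K G *m v) k 0 = - \int[m]_(x in K k) divg (gradv G v x).
Proof.
move=> mK K_fin hG.
have Idiv i : m.-integrable (K k) (EFin \o (fun x => divg (G i x))).
  apply: sqr_integrable_integrable => //.
  exact: sqr_integrableS (sqr_integrable_divg (hG i)).
rewrite mxE /gradv; under eq_Rintegral do rewrite divg_sum.
rewrite Rintegral_sum // => [|i]; last exact: integrableZl (Idiv i).
rewrite -sumrN; apply: eq_bigr => i _.
by rewrite RintegralZl // !mxE mulNr mulrC.
Qed.

End pressure_matrices.

Unset Implicit Arguments.
Set Strict Implicit.

Theorem lemmaA1
  (R : realType) (d : nat) (hd : d = 2%N \/ d = 3%N)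
  (dT : measure_display) (T : measurableType dT)
  (m : {measure set T -> \bar R})
  (nK : nat) (K : 'I_nK -> set T)
  (hKmeas : forall k, measurable (K k))
  (hKpos : forall k, (0 < m (K k))%E)
  (hKfin : forall k, (m (K k) < +oo)%E)
  (hKdisj : forall k l, k != l -> K k `&` K l = set0)
  (hKcover : \bigcup_(k in [set: 'I_nK]) K k = [set: T])
  (nu : nat) (G : 'I_nu -> T -> 'M[R]_d)
  (hGmeas : forall i p q, measurable_fun [set: T] (fun x => G i x p q))
  (hGL2 : forall i p q,
      m.-integrable [set: T] (fun x => ((G i x p q) ^+ 2)%:E))
  (mu lam : R) (hmu : 0 < mu) (hlam : 0 <= lam) :
  forall v : 'cV[R]_nu,
    normH (invmx (Mpmat m K)) (Bmat m K G *m v)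
      <= (zeta d mu lam)^-1 * normH (Amat m mu lam G) v.
Proof.
move=> v; have hG i : sqr_integrable_mx m (G i) by move=> p q; split.
have hw := sqr_integrable_mx_gradv v hG.
have d_gt0 : (0 < d)%N by case: hd => ->.
have zeta2_gt0 : 0 < lam + 2 * mu / d%:R.
  by rewrite ltr_wpDl // divr_gt0 ?mulr_gt0 ?ltr0n.
rewrite /normH /zeta Amat_form //; apply: sqrt_le_sqrtV_mul => //.
rewrite Mpmat_inv_form //.
under eq_bigr => k _ do rewrite Bmat_mul_gradv // sqrrN.
apply: le_trans (Rintegral_sqr_divg_le_aform lam d_gt0 (ltW hmu) hw).
rewrite ler_wpM2l ?(ltW zeta2_gt0) //.
exact: sum_sqr_Rintegral_le (sqr_integrable_divg hw).
Qed.
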